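(* Let $A,B,D>0$ be constants and let $f:(0,\infty)\to\mathbb{R}$ be defined by $$f(X)=A(2DX)^{-1/2}-B(2DX)^{-3/2}.$$ Set $\tilde{A}=A/(2D)^{1/2}$ and $\tilde{B}=B/(2D)^{3/2}$. Let $\beta>0$ and $\alpha>1$, and let $g:(0,\infty)\to(-\infty,0]$ be given by $g(X)=-\beta X^{\alpha}$. If $$\dot{g}\!\left(\frac{5\tilde{B}}{\tilde{A}}\right)>\dot{f}\!\left(\frac{5\tilde{B}}{\tilde{A}}\right),$$ where the dot denotes the derivative with respect to $X$, then the function $f-g$ (the M-Köhler curve) has at least one local maximum and at least one local minimum on $(0,\infty)$.
   Context: The function $f$ is the Köhler curve written in the variable $X=r^2/(2D)$ (scaled squared droplet radius), and $g$ is a sink term; the condensational growth model is $\dot X=\lambda-(f(X)-g(X))$, and $f-g$ is called the M-Köhler curve. *)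

From Stdlib Require Import Reals.
From Coquelicot Require Import Coquelicot.
Open Scope R_scope.

(* Köhler curve in the variable X = r^2/(2D):  f(X) = A (2DX)^{-1/2} - B (2DX)^{-3/2}
   (meaningful for X > 0). *)
Definition kohler (A B D : R) (X : R) : R :=
  A * Rpower (2 * D * X) (-(1/2)) - B * Rpower (2 * D * X) (-(3/2)).

Definition sink (beta alpha : R) (X : R) : R := - (beta * Rpower X alpha).

Definition is_local_max_pos (h : R -> R) (x : R) : Prop :=
  0 < x /\ exists delta, 0 < delta /\
    forall y, 0 < y -> Rabs (y - x) < delta -> h y <= h x.

Definition is_local_min_pos (h : R -> R) (x : R) : Prop :=
  0 < x /\ exists delta, 0 < delta /\
    forall y, 0 < y -> Rabs (y - x) < delta -> h x <= h y.

(* Write h = f - g.  The Köhler term -B (2DX)^(-3/2) drives h to -oo as X -> 0+, while the sink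
   term beta X^alpha drives it to +oo as X -> oo.  The hypothesis says h'(x0) < 0 at
   x0 = 5 Bt/At, so h rises just to the left of x0 and falls just to the right of it.  On a
   compact interval [e, x0] with h e < h x0 the maximum of h is therefore attained in the
   interior, and likewise the minimum on an interval [x0, M] with h M > h x0.  Beyond its
   positivity, the particular value of x0 plays no role. *)
From Stdlib Require Import Reals Lra Psatz.
From Coquelicot Require Import Coquelicot.
Open Scope R_scope.

Lemma local_max_pos_of_interior_peak (h : R -> R) a p b :
  0 <= a -> a < p < b -> (forall c, a <= c <= b -> continuity_pt h c) ->
  h a < h p -> h b < h p -> exists x, is_local_max_pos h x.
Proof.
  intros Ha Hp Hcont Hap Hbp.
  destruct (continuity_ab_maj h a b) as [m [Hmax Hm]]; [lra | exact Hcont |].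
  assert (Hpm : h p <= h m) by (apply Hmax; lra).
  assert (Ham : a < m) by (destruct Hm as [[Ham | Ham] _]; [exact Ham | subst; lra]).
  assert (Hmb : m < b) by (destruct Hm as [_ [Hmb | Hmb]]; [exact Hmb | subst; lra]).
  exists m; split; [lra |].
  exists (Rmin (m - a) (b - m)); split; [apply Rmin_glb_lt; lra |].
  intros y _ Hy; apply Rabs_def2 in Hy.
  pose proof (Rmin_l (m - a) (b - m)); pose proof (Rmin_r (m - a) (b - m)).
  apply Hmax; lra.
Qed.

Lemma local_min_pos_of_interior_valley (h : R -> R) a p b :
  0 <= a -> a < p < b -> (forall c, a <= c <= b -> continuity_pt h c) ->
  h p < h a -> h p < h b -> exists x, is_local_min_pos h x.
Proof.
  intros Ha Hp Hcont Hpa Hpb.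
  destruct (local_max_pos_of_interior_peak (fun x => - h x) a p b) as [m [Hm [d [Hd Hloc]]]];
    try (intros; apply continuity_pt_opp, Hcont); try lra.
  exists m; split; [exact Hm |].
  exists d; split; [exact Hd |].
  intros y Hy Hym; specialize (Hloc y Hy Hym); lra.
Qed.

Lemma derivable_pt_lim_neg_descent (h : R -> R) x l :
  derivable_pt_lim h x l -> l < 0 ->
  exists delta, 0 < delta /\ forall t, 0 < t < delta -> h (x + t) < h x < h (x - t).
Proof.
  intros Hd Hl.
  destruct (Hd (- l / 2)) as [delta Hdelta]; [lra |].
  exists delta; split; [apply cond_pos |].
  assert (Hslope : forall s, s <> 0 -> Rabs s < delta -> (h (x + s) - h x) / s < 0).
  { intros s Hs Hsd; specialize (Hdelta s Hs Hsd); apply Rabs_def2 in Hdelta; lra. }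
  intros t Ht.
  assert (Ht0 : t <> 0) by lra.
  assert (Habs : Rabs t < delta) by (rewrite Rabs_pos_eq; lra).
  assert (Habs' : Rabs (- t) < delta) by (rewrite Rabs_Ropp; exact Habs).
  pose proof (Hslope t Ht0 Habs) as Hright.
  pose proof (Hslope (- t) ltac:(lra) Habs') as Hleft.
  set (qr := (h (x + t) - h x) / t) in Hright.
  set (ql := (h (x + - t) - h x) / - t) in Hleft.
  assert (Er : h (x + t) - h x = qr * t) by (unfold qr; field; exact Ht0).
  assert (El : h (x - t) - h x = ql * - t) by (unfold ql, Rminus; field; exact Ht0).
  split; nra.
Qed.

Lemma Rpower_neg_three_halves x :
  0 < x -> Rpower x (- (3 / 2)) = Rpower x (- (1 / 2)) ^ 3.
Proof.
  intros Hx.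
  rewrite <- Rpower_pow by (unfold Rpower; apply exp_pos).
  rewrite Rpower_mult; f_equal; simpl; field.
Qed.

Lemma Rpower_inv_sq_neg_half u : 0 < u -> Rpower (/ u ^ 2) (- (1 / 2)) = u.
Proof.
  intros Hu.
  unfold Rpower; rewrite ln_Rinv, ln_pow by (try apply pow_lt; lra).
  replace (- (1 / 2) * - (INR 2 * ln u)) with (ln u) by (simpl; field).
  apply exp_ln, Hu.
Qed.

Lemma kohler_inv_sq A B D u :
  0 < D -> 0 < u -> kohler A B D (/ (2 * D * u ^ 2)) = A * u - B * u ^ 3.
Proof.
  intros HD Hu.
  assert (Hu2 : 0 < u ^ 2) by (apply pow_lt, Hu).
  unfold kohler.
  replace (2 * D * / (2 * D * u ^ 2)) with (/ u ^ 2) by (field; lra).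
  rewrite Rpower_neg_three_halves, Rpower_inv_sq_neg_half by (try apply Rinv_0_lt_compat; lra).
  reflexivity.
Qed.

Lemma kohler_ge A B D X : 0 <= A -> 0 <= B -> 1 <= 2 * D * X -> - B <= kohler A B D X.
Proof.
  intros HA HB HX.
  unfold kohler; rewrite Rpower_neg_three_halves by lra.
  set (s := Rpower (2 * D * X) (- (1 / 2))).
  assert (Hs0 : 0 < s) by apply exp_pos.
  assert (Hs1 : s <= 1).
  { unfold s; rewrite <- (Rpower_O (2 * D * X)) at 2 by lra; apply Rle_Rpower; lra. }
  assert (s ^ 3 <= 1) by (simpl; nra).
  nra.
Qed.

Lemma sink_ge beta alpha X :
  0 <= beta -> 0 <= alpha -> 0 < X <= 1 -> - beta <= sink beta alpha X.
Proof.
  intros Hb Ha HX.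
  assert (HXa : Rpower X alpha <= 1).
  { apply Rle_trans with (Rpower 1 alpha); [apply Rle_Rpower_l; lra |].
    unfold Rpower; rewrite ln_1, Rmult_0_r, exp_0; lra. }
  unfold sink; nra.
Qed.

Lemma sink_le beta alpha X :
  0 <= beta -> 1 <= alpha -> 1 <= X -> sink beta alpha X <= - (beta * X).
Proof.
  intros Hb Ha HX.
  assert (X <= Rpower X alpha)
    by (rewrite <- (Rpower_1 X) at 1 by lra; apply Rle_Rpower; lra).
  unfold sink; nra.
Qed.

Lemma cubic_eventually_lt a b c K :
  0 < b -> Rbar_locally p_infty (fun u => a * u - b * u ^ 3 + c < K).
Proof.
  intros Hb.
  set (k := Rabs a + Rabs c + Rabs K + 1).
  exists (1 + k / b); intros u Hu.
  assert (Hkb : b * (k / b) = k) by (field; lra).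
  assert (Hk : 1 <= k) by (unfold k; pose proof (Rabs_pos a); pose proof (Rabs_pos c);
                           pose proof (Rabs_pos K); lra).
  assert (Hu1 : 1 < u) by (assert (0 < k / b) by (apply Rdiv_lt_0_compat; lra); lra).
  assert (Hcube : k * u <= b * u ^ 3).
  { rewrite <- Hkb; replace (b * u ^ 3) with (b * u * u * u) by ring.
    apply Rle_trans with (b * u * u).
    - apply Rmult_le_compat_r; [lra | apply Rmult_le_compat_l; lra].
    - rewrite <- (Rmult_1_r (b * u * u)) at 1.
      apply Rmult_le_compat_l; [repeat apply Rmult_le_pos |]; lra. }
  pose proof (Rle_abs a); pose proof (Rle_abs c); pose proof (Rabs_maj2 K).
  assert (a * u <= Rabs a * u) by (apply Rmult_le_compat_r; lra).
  assert (k - Rabs a <= (k - Rabs a) * u)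
    by (rewrite <- (Rmult_1_r (k - Rabs a)) at 1; apply Rmult_le_compat_l;
        unfold k; pose proof (Rabs_pos c); pose proof (Rabs_pos K); lra).
  unfold k in *; lra.
Qed.

Lemma inv_sq_eventually_lt D r :
  0 < D -> 0 < r -> Rbar_locally p_infty (fun u => 0 < u /\ / (2 * D * u ^ 2) < r).
Proof.
  intros HD Hr.
  exists (1 + / (2 * D * r)); intros u Hu.
  assert (Hinv : 0 < / (2 * D * r)) by (apply Rinv_0_lt_compat; nra).
  assert (Hu1 : 1 < u) by lra.
  split; [lra |].
  assert (H2Dr : 2 * D * r * / (2 * D * r) = 1) by (field; lra).
  assert (Hsq : 1 < 2 * D * u ^ 2 * r) by (simpl; nra).
  apply (Rmult_lt_reg_l (2 * D * u ^ 2)); [simpl; nra |].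
  rewrite Rinv_r by (simpl; nra); lra.
Qed.

Lemma kohler_sub_sink_lt_near_0 A B D beta alpha K r :
  0 < B -> 0 < D -> 0 <= beta -> 0 <= alpha -> 0 < r ->
  exists X, 0 < X < r /\ kohler A B D X - sink beta alpha X < K.
Proof.
  intros HB HD Hb Ha Hr.
  assert (Hr1 : 0 < Rmin r 1) by (apply Rmin_glb_lt; lra).
  destruct (Hierarchy.filter_ex _ (filter_and _ _ (cubic_eventually_lt A B beta K HB)
                                     (inv_sq_eventually_lt D (Rmin r 1) HD Hr1)))
    as [u [Hcubic [Hu HX]]].
  pose proof (Rmin_l r 1); pose proof (Rmin_r r 1).
  assert (HX0 : 0 < / (2 * D * u ^ 2))
    by (apply Rinv_0_lt_compat, Rmult_lt_0_compat; [lra | apply pow_lt; lra]).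
  exists (/ (2 * D * u ^ 2)); split; [lra |].
  rewrite kohler_inv_sq by lra.
  pose proof (sink_ge beta alpha (/ (2 * D * u ^ 2)) Hb Ha ltac:(lra)).
  lra.
Qed.

Lemma kohler_sub_sink_gt_near_infty A B D beta alpha K r :
  0 <= A -> 0 <= B -> 0 < D -> 0 < beta -> 1 <= alpha ->
  exists X, r < X /\ K < kohler A B D X - sink beta alpha X.
Proof.
  intros HA HB HD Hb Ha.
  set (X := 1 + Rabs r + / (2 * D) + (Rabs K + B) / beta).
  assert (Hinv : 0 < / (2 * D)) by (apply Rinv_0_lt_compat; lra).
  assert (H2D : 2 * D * / (2 * D) = 1) by (field; lra).
  assert (HKb : beta * ((Rabs K + B) / beta) = Rabs K + B) by (field; lra).
  assert (Hq : 0 <= (Rabs K + B) / beta)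
    by (apply Rdiv_le_0_compat; [pose proof (Rabs_pos K); lra | exact Hb]).
  pose proof (Rabs_pos r); pose proof (Rle_abs r); pose proof (Rle_abs K).
  exists X; split; [unfold X; lra |].
  pose proof (kohler_ge A B D X HA HB ltac:(unfold X; nra)).
  pose proof (sink_le beta alpha X ltac:(lra) Ha ltac:(unfold X; lra)).
  assert (beta * X >= Rabs K + B + beta) by (unfold X; nra).
  lra.
Qed.

Lemma ex_derive_kohler A B D X : 0 < D -> 0 < X -> ex_derive (kohler A B D) X.
Proof. intros HD HX; unfold kohler, Rpower; auto_derive; nra. Qed.

Lemma ex_derive_sink beta alpha X : 0 < X -> ex_derive (sink beta alpha) X.
Proof. intros HX; unfold sink, Rpower; auto_derive; lra. Qed.

Lemma continuity_pt_kohler_sub_sink A B D beta alpha X :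
  0 < D -> 0 < X -> continuity_pt (fun X => kohler A B D X - sink beta alpha X) X.
Proof.
  intros HD HX; apply continuity_pt_filterlim.
  exact (ex_derive_continuous _ _
           (ex_derive_minus _ _ _ (ex_derive_kohler A B D X HD HX) (ex_derive_sink beta alpha X HX))).
Qed.

Theorem proposition1 (A B D beta alpha : R) :
  0 < A -> 0 < B -> 0 < D -> 0 < beta -> 1 < alpha ->
  let At := A / Rpower (2 * D) (1/2) in
  let Bt := B / Rpower (2 * D) (3/2) in
  let f := kohler A B D in
  let g := sink beta alpha in
  Derive g (5 * Bt / At) > Derive f (5 * Bt / At) ->
  (exists x, is_local_max_pos (fun X => f X - g X) x) /\
  (exists x, is_local_min_pos (fun X => f X - g X) x).
Proof.
  intros HA HB HD Hb Ha At Bt f g Hder.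
  assert (HAt : 0 < At) by (apply Rdiv_lt_0_compat; [lra | apply exp_pos]).
  assert (HBt : 0 < Bt) by (apply Rdiv_lt_0_compat; [lra | apply exp_pos]).
  assert (Hx0 : 0 < 5 * Bt / At) by (apply Rdiv_lt_0_compat; lra).
  set (x0 := 5 * Bt / At) in *; clearbody x0.
  set (h := fun X => f X - g X).
  assert (Hcont : forall c, 0 < c -> continuity_pt h c)
    by (intros; apply continuity_pt_kohler_sub_sink; lra).
  assert (Hslope : derivable_pt_lim h x0 (Derive f x0 - Derive g x0)).
  { apply is_derive_Reals.
    exact (is_derive_minus f g x0 _ _ (Derive_correct _ _ (ex_derive_kohler A B D x0 HD Hx0))
                                      (Derive_correct _ _ (ex_derive_sink beta alpha x0 Hx0))). }
  destruct (derivable_pt_lim_neg_descent h x0 _ Hslope ltac:(lra)) as [delta [Hdelta Hdesc]].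
  set (t := Rmin (delta / 2) (x0 / 2)).
  assert (Ht : 0 < t < delta /\ t < x0)
    by (unfold t; pose proof (Rmin_l (delta / 2) (x0 / 2));
        pose proof (Rmin_r (delta / 2) (x0 / 2)); repeat split;
        try apply Rmin_glb_lt; lra).
  destruct (Hdesc t ltac:(lra)) as [Hright Hleft].
  destruct (kohler_sub_sink_lt_near_0 A B D beta alpha (h x0) (x0 - t))
    as [e [He Hhe]]; try lra.
  destruct (kohler_sub_sink_gt_near_infty A B D beta alpha (h x0) (x0 + t))
    as [m [Hm Hhm]]; try lra.
  split.
  - apply (local_max_pos_of_interior_peak h e (x0 - t) x0);
      try (intros; apply Hcont); unfold h, f, g in *; lra.
  - apply (local_min_pos_of_interior_valley h x0 (x0 + t) m);
      try (intros; apply Hcont); unfold h, f, g in *; lra.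
Qed.
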